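(* For every $\alpha<\omega_1$: (1) $\langle A_\alpha,\tau_\alpha\rangle$ is a Baire space; (2) if $\alpha>0$ then $\tau_\alpha$ has no isolated points; (3) every subset of $A_\alpha$ that is Borel in the standard topology of $\mathbf{Tr}$ is Borel with respect to $\tau_\alpha$.
   Context: $\mathbf{Tr}$ is the set of all subtrees of $\omega^{<\omega}$ (subsets closed under initial segments), a closed subspace of $2^{(\omega^{<\omega})}$ with the product topology. $\mathbf{Trw}\subseteq\mathbf{Tr}$ is the set of well-founded trees (no infinite branch). For $T\in\mathbf{Trw}$, $h_T:T\to\omega_1$ is the canonical rank function: $h_T(\nu)=\sup\{h_T(\nu')+1:\nu'\in T \text{ an immediate successor of }\nu\}$ (so terminal nodes get rank 0). For $\alpha<\omega_1$, $A_\alpha=\{T\in\mathbf{Trw}: h_T(\langle\rangle)=\alpha\}$. For $n\in\omega$ let $n^{\le n}$ be the set of sequences of length $\le n$ with values $<n$. $\tau_\alpha$ is the topology on $A_\alpha$ with basis the sets $U(n,T)=\{T'\in A_\alpha: T'\cap n^{\le n}=T\cap n^{\le n} \text{ and } h_{T'}\restriction (T\cap n^{\le n})=h_T\restriction(T\cap n^{\le n})\}$ for $T\in A_\alpha$, $n\in\omega$. *)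

From HB Require Import structures.
From mathcomp Require Import all_boot all_order.
From mathcomp Require Import all_classical.
From mathcomp Require Import all_reals all_analysis.
Set Implicit Arguments. Unset Strict Implicit. Unset Printing Implicit Defensive.
Local Open Scope classical_set_scope.

(* Countable ordinals: Brouwer ordinals (zero, successor, sup of an   *)
(* omega-sequence) with their standard (Kraus et al.) order.  Up to   *)
(* the induced equivalence these are exactly the ordinals < omega_1.  *)
Inductive Ord : Type :=
| OZ : Ord
| OS : Ord -> Ord
| OL : (nat -> Ord) -> Ord.

Inductive ole : Ord -> Ord -> Prop :=
| ole_zero x : ole OZ x
| ole_trans x y z : ole x y -> ole y z -> ole x z
| ole_succ_mono x y : ole x y -> ole (OS x) (OS y)
| ole_cocone x f k : ole x (f k) -> ole x (OL f)
| ole_limiting f x : (forall k, ole (f k) x) -> ole (OL f) x.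

Definition olt (x y : Ord) := ole (OS x) y.
Definition oeq (x y : Ord) := ole x y /\ ole y x.

(* Trees.  omega^{<omega} = seq nat; 2^(omega^{<omega}) = seq nat -> bool *)
(* with the product topology (bool discrete).                          *)
Definition Tt : Type := {ptws seq nat -> bool}.

Definition Tr : set Tt :=
  [set t | forall s s' : seq nat, prefix s' s -> t s -> t s'].

Definition branch_pref (f : nat -> nat) (n : nat) : seq nat := mkseq f n.

Definition Trw : set Tt :=
  [set t | Tr t /\ ~ exists f : nat -> nat, forall n, t (branch_pref f n)].

(* The canonical rank function, as its graph:
   hrank t s a  means  s \in t and h_t(s) = a, where
   h_t(s) = sup { h_t(s') + 1 : s' immediate successor of s in t }
   (terminal nodes get sup of the zero sequence, i.e. 0). *)
Inductive hrank (t : Tt) : seq nat -> Ord -> Prop :=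
| hrank_intro (s : seq nat) (g : nat -> Ord) :
    t s ->
    (forall n, t (rcons s n) -> hrank t (rcons s n) (g n)) ->
    hrank t s (OL (fun n => if t (rcons s n) then OS (g n) else OZ)).

Definition hval (t : Tt) (s : seq nat) (a : Ord) : Prop :=
  exists b, hrank t s b /\ oeq b a.

Definition hsame (t t' : Tt) (s : seq nat) : Prop :=
  exists a b, hrank t s a /\ hrank t' s b /\ oeq a b.

Definition Aal (al : Ord) : set Tt :=
  [set t | Trw t /\ hval t [::] al].

Definition small (n : nat) (s : seq nat) : bool :=
  (size s <= n) && all (fun x => x < n) s.

Definition Ubas (al : Ord) (n : nat) (t : Tt) : set Tt :=
  [set t' | Aal al t' /\
            (forall s, small n s -> t' s = t s) /\
            (forall s, small n s -> t s -> hsame t t' s)].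

Definition tau_open (al : Ord) (O : set Tt) : Prop :=
  O `<=` Aal al /\
  forall t', O t' -> exists n t, Aal al t /\ Ubas al n t t' /\ Ubas al n t `<=` O.

(* Generic notions for a topology on a carrier set X of a type T given  *)
(* by its family of open sets op.                                        *)
Definition dense_in {T} (op : set T -> Prop) (D : set T) : Prop :=
  forall O, op O -> O !=set0 -> (O `&` D) !=set0.

Definition Baire_in {T} (op : set T -> Prop) : Prop :=
  forall F : nat -> set T, (forall n, op (F n) /\ dense_in op (F n)) ->
    dense_in op (\bigcap_n F n).

Definition isolated_in {T} (X : set T) (op : set T -> Prop) (x : T) : Prop :=
  X x /\ op [set x].

Definition Tr_open (B : set Tt) : Prop :=
  exists O : set Tt, open O /\ B = Tr `&` O.

Definition Borel_Tr (B : set Tt) : Prop :=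
  <<s Tr, Tr_open >> B.

Definition Borel_tau (al : Ord) (B : set Tt) : Prop :=
  <<s Aal al, tau_open al >> B.

From mathcomp Require Import all_boot all_order.
From mathcomp Require Import all_classical.
From mathcomp Require Import all_reals all_analysis.
From mathcomp Require Import zify.
Set Implicit Arguments. Unset Strict Implicit. Unset Printing Implicit Defensive.
Local Open Scope classical_set_scope.

(* (1) Given dense open sets F_k and a basic set U(n_0, t_0), choose basic sets
   U(n_(k+1), t_(k+1)) inside U(n_k, t_k) and F_k, with n_k strictly
   increasing.  Every node is eventually frozen, so the t_k converge to a tree
   T.  Ranks may drop in such a limit; serving countably many tasks along the
   way (task_done) prevents it, so T lies in every U(n_k, t_k), hence in
   U(n_0, t_0) and in every F_k.
   (2) U(n, T) does not constrain the first-level subtrees with labels >= n: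
   copying, swapping or deleting such a subtree while keeping the supremum of
   the ranks at the root yields another tree of U(n, T).
   (3) tau_alpha refines the subspace topology of A_alpha, so the traces on
   A_alpha of the Borel sets of Tr form a sigma-algebra of tau_alpha-Borel
   sets. *)

(* ole has a transitivity constructor and cannot be inverted directly; this
   structurally recursive presentation of it can. *)
Fixpoint ord_le (x y : Ord) {struct x} : Prop :=
  match x with
  | OZ => True
  | OS x' => (fix ord_lt' (y : Ord) : Prop :=
               match y with
               | OZ => False
               | OS y' => ord_le x' y'
               | OL g => exists k, ord_lt' (g k)
               end) y
  | OL f => forall k, ord_le (f k) y
  end.

Lemma ord_le_cocone x f k : ord_le x (f k) -> ord_le x (OL f).
Proof.
elim: x => [//|x _|g IHg] /=; first by exists k.
by move=> Hg m; apply: IHg.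
Qed.

Lemma ord_le_refl x : ord_le x x.
Proof. by elim: x => [|x IHx|f IHf] //= k; apply: ord_le_cocone (IHf k). Qed.

Lemma ord_le_trans x y z : ord_le x y -> ord_le y z -> ord_le x z.
Proof.
elim: x y z => [//|x IHx|f IHf] y z /=; last by move=> Hf Hyz k; apply: IHf (Hf k) Hyz.
elim: y z => [//|y _|g IHg] z /=; last by move=> [k Hk] Hgz; apply: IHg (Hgz k).
move=> Hxy; elim: z => [//|z _|h IHh] /=; first exact: IHx.
by move=> [k Hk]; exists k; apply: IHh.
Qed.

Lemma oleP x y : ole x y <-> ord_le x y.
Proof.
split.
  elim=> {x y} [//|x y z _ ? _|x y _ //|x f k _|f x _ //]; first exact: ord_le_trans.
  exact: ord_le_cocone.
elim: x y => [|x IHx|f IHf] y; first by move=> _; apply: ole_zero.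
  elim: y => [//|y _|g IHg]; first by move=> Hxy; apply/ole_succ_mono/IHx.
  by move=> [k Hk]; apply: (@ole_cocone _ _ k); apply: IHg.
by move=> Hf; apply: ole_limiting => k; apply: IHf.
Qed.

Lemma ole_refl x : ole x x.
Proof. by apply/oleP; apply: ord_le_refl. Qed.

Lemma oleS0 x : ~ ole (OS x) OZ.
Proof. by move/oleP. Qed.

Lemma oleSS x y : ole (OS x) (OS y) -> ole x y.
Proof. by move/oleP=> Hxy; apply/oleP. Qed.

Lemma oleS_sup x f : ole (OS x) (OL f) -> exists k, ole (OS x) (f k).
Proof. by move/oleP=> [k Hk]; exists k; apply/oleP. Qed.

Lemma olt_wf : well_founded olt.
Proof.
suff Acc_below y x : ord_le (OS x) y -> Acc olt x.
  by move=> x; apply: (Acc_below (OS x)); apply: ord_le_refl.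
elim: y x => [//|y IHy|g IHg] x /=; last by move=> [k Hk]; apply: (IHg k).
move=> Hxy; constructor=> z /oleP Hzx; apply: IHy.
exact: ord_le_trans Hzx Hxy.
Qed.

Lemma oeq_refl x : oeq x x.
Proof. by split; apply: ole_refl. Qed.

Lemma oeq_sym x y : oeq x y -> oeq y x.
Proof. by case. Qed.

Lemma oeq_trans x y z : oeq x y -> oeq y z -> oeq x z.
Proof. by move=> [? ?] [? ?]; split; apply: ole_trans; eassumption. Qed.

Lemma hrank_functional (t : Tt) s a b : hrank t s a -> hrank t s b -> a = b.
Proof.
move=> Ha; elim: Ha b => {}s g _ _ IH b Hb.
inversion Hb as [s' g' _ Hg']; subst; congr OL; apply: funext => n.
by case E: (t (rcons s n)) => //; congr OS; apply: IH => //; apply: Hg'.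
Qed.

Lemma hrank_node (t : Tt) s a : hrank t s a -> t s.
Proof. by case. Qed.

Lemma hrank_child (t : Tt) s a n : hrank t s a -> t (rcons s n) ->
  exists b, hrank t (rcons s n) b.
Proof. by case=> {s a} s g _ Hg Hn; exists (g n); apply: Hg. Qed.

Lemma hrank_cat (t : Tt) s a r : Tr t -> hrank t s a -> t (s ++ r) ->
  exists b, hrank t (s ++ r) b.
Proof.
move=> Htr Ha; elim/last_ind: r => [|r n IHr]; first by rewrite cats0; exists a.
rewrite -rcons_cat => Hn; have [b Hb] := IHr (Htr _ _ (prefix_rcons _ _) Hn).
exact: hrank_child Hb Hn.
Qed.

Lemma Aal_hrank al (t : Tt) s : Aal al t -> t s -> exists b, hrank t s b.
Proof. by move=> [[Htr _] [a [Ha _]]]; apply: (@hrank_cat t [::] a). Qed.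

Lemma hrank_no_branch (t : Tt) s a f : hrank t s a -> ~ (forall n, t (s ++ mkseq f n)).
Proof.
move=> Ha; elim: Ha f => {}s g _ _ IH f Hf.
apply: (IH (f 0) _ (fun n => f n.+1)) => [|n]; first by have := Hf 1; rewrite cats1.
have E : mkseq f n.+1 = f 0 :: mkseq (fun k => f k.+1) n.
  by rewrite /mkseq /= -add1n iotaDl -map_comp.
by have := Hf n.+1; rewrite E -cat_rcons.
Qed.

(* The rank of s in t, and the junk value OZ when s has none. *)
Definition rank (t : Tt) (s : seq nat) : Ord :=
  if pselect (exists b, hrank t s b) is left H then projT1 (cid H) else OZ.

Lemma rankP (t : Tt) s : (exists b, hrank t s b) -> hrank t s (rank t s).
Proof. by rewrite /rank; case: pselect => // H _; apply: (projT2 (cid H)). Qed.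

Lemma rankE (t : Tt) s a : hrank t s a -> rank t s = a.
Proof. by move=> Ha; apply: hrank_functional (rankP (ex_intro _ a Ha)) Ha. Qed.

Lemma rank_unfold (t : Tt) s : (exists b, hrank t s b) ->
  rank t s = OL (fun n => if t (rcons s n) then OS (rank t (rcons s n)) else OZ).
Proof.
move=> [a Ha]; rewrite (rankE Ha); case: Ha => {s a} s g _ Hg.
congr OL; apply: funext => n; case E: (t (rcons s n)) => //.
by rewrite (rankE (Hg n E)).
Qed.

Lemma ole_rank_child (t : Tt) s n : (exists b, hrank t s b) -> t (rcons s n) ->
  olt (rank t (rcons s n)) (rank t s).
Proof.
move=> Hs Hn; rewrite [rank t s]rank_unfold //; apply: (@ole_cocone _ _ n).
by rewrite Hn; apply: ole_refl.
Qed.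

Lemma hsame_refl (t : Tt) s a : hrank t s a -> hsame t t s.
Proof. by move=> Ha; exists a, a; split; last split; last apply: oeq_refl. Qed.

Lemma hsame_trans (t1 t2 t3 : Tt) s : hsame t1 t2 s -> hsame t2 t3 s -> hsame t1 t3 s.
Proof.
move=> [a [b [Ha [Hb Hab]]]] [b' [c [Hb' [Hc Hbc]]]].
rewrite (hrank_functional Hb Hb') in Hab.
by exists a, c; split; last split; last apply: oeq_trans Hab Hbc.
Qed.

Lemma hsame_rank (t t' : Tt) s : hsame t t' s -> oeq (rank t s) (rank t' s).
Proof. by move=> [a [b [Ha [Hb Hab]]]]; rewrite (rankE Ha) (rankE Hb). Qed.

Lemma small_le n m s : n <= m -> small n s -> small m s.
Proof.
move=> nm /andP[Hs Ha]; apply/andP; split; first exact: leq_trans Hs nm.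
by apply/allP => x /(allP Ha) xn; apply: leq_trans xn nm.
Qed.

Lemma small_rcons n s j : small n (rcons s j) -> small n s.
Proof.
rewrite /small size_rcons all_rcons => /andP[Hs /andP[_ Ha]].
by rewrite Ha ltnW.
Qed.

Definition bound (s : seq nat) : nat := size s + sumn s + 1.

Lemma small_bound s : small (bound s) s.
Proof.
apply/andP; split; first by rewrite /bound -addnA leq_addr.
apply/allP => x xs; rewrite /bound addn1 ltnS (leq_trans _ (leq_addl _ _)) //.
elim: s xs => //= y s IHs; rewrite in_cons => /orP[/eqP->|/IHs]; first exact: leq_addr.
by move/leq_trans; apply; apply: leq_addl.
Qed.

Lemma Ubas_center al n (t : Tt) : Aal al t -> Ubas al n t t.
Proof.
move=> At; split=> //; split=> [//|s _ Hs].
by have [b Hb] := Aal_hrank At Hs; apply: hsame_refl Hb.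
Qed.

Lemma Ubas_shrink al n m (t t' : Tt) : n <= m -> Ubas al n t t' ->
  Ubas al m t' `<=` Ubas al n t.
Proof.
move=> nm [_ [E1 E2]] t'' [At'' [F1 F2]]; split=> //; split=> s Hs.
  by rewrite F1 ?E1 //; apply: small_le Hs.
move=> Hts; apply: hsame_trans (E2 s Hs Hts) (F2 s (small_le nm Hs) _).
by rewrite E1.
Qed.

Lemma Ubas_open al n (t : Tt) : Aal al t -> tau_open al (Ubas al n t).
Proof.
move=> At; split=> [t' [] //|t' Ht']; exists n, t'.
have At' : Aal al t' by case: Ht'.
by split; last split; [|apply: Ubas_center|apply: Ubas_shrink Ht'].
Qed.

Lemma tau_open_nbhs al O (t : Tt) : tau_open al O -> O t ->
  exists n, forall m, n <= m -> Ubas al m t `<=` O.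
Proof.
move=> [_ HO] Ot; have [n [u [_ [Htu HuO]]]] := HO t Ot.
by exists n => m nm; apply: subset_trans HuO; apply: Ubas_shrink nm Htu.
Qed.

Lemma injective_unbounded (g : nat -> nat) : injective g -> forall K, exists m, K <= g m.
Proof.
move=> ig K; apply: contrapT => /forallNP Hlt.
have U : uniq (map g (iota 0 K.+1)) by rewrite map_inj_uniq ?iota_uniq.
have S : {subset map g (iota 0 K.+1) <= iota 0 K}.
  by move=> _ /mapP[m _ ->]; rewrite mem_iota ltnNge; apply/negP/Hlt.
by have := uniq_leq_size U S; rewrite size_map !size_iota ltnn.
Qed.

Definition task (k : nat) : option (seq nat * nat * nat) :=
  omap fst (unpickle k : option (seq nat * nat * nat * nat)).

Lemma task_often c K : exists2 k, K <= k & task k = Some c.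
Proof.
have inj_code : injective (fun m : nat => pickle (c, m)) by move=> m m' /(pcan_inj pickleK) /(congr1 snd).
have [m Km] := injective_unbounded inj_code K.
by exists (pickle (c, m)); rewrite // /task pickleK.
Qed.

Section BaireConstruction.
Variables (al : Ord) (F : nat -> set Tt) (t0 : Tt) (n0 : nat).
Hypothesis F_open_dense : forall k, tau_open al (F k) /\ dense_in (tau_open al) (F k).
Hypothesis At0 : Aal al t0.

(* Task (s, i, k0): the child s^i of s present at stage k0 must get, at a stage
   serving the task, a frozen sibling s^j of at least its rank.  Since the
   stages only fix finitely many nodes, ranks would otherwise be lost in the
   limit. *)
Definition task_done k (L : seq (Tt * nat)) (p : Tt * nat) : Prop :=
  if task k is Some (s, i, k0) then
    let q := nth (t0, n0) L k0 in
    k0 < size L -> small q.2 s -> q.1 s -> q.1 (rcons s i) ->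
    exists j, [/\ p.1 (rcons s j), small p.2 (rcons s j)
                & ole (rank q.1 (rcons s i)) (rank p.1 (rcons s j))]
  else True.

Definition next_ok k L (p : Tt * nat) : Prop := let q := last (t0, n0) L in
  [/\ Ubas al q.2 q.1 p.1, Ubas al p.2 p.1 `<=` F k, q.2 < p.2 & task_done k L p].

Definition next k L : Tt * nat :=
  if pselect (exists p, next_ok k L p) is left H then projT1 (cid H) else (t0, n0).

Fixpoint stages k : seq (Tt * nat) :=
  if k is k'.+1 then rcons (stages k') (next k' (stages k')) else [:: (t0, n0)].

Definition stage k := last (t0, n0) (stages k).

Lemma stagesE k : stages k = map stage (iota 0 k.+1).
Proof.
elim: k => [//|k IHk].
by rewrite -[k.+2]addn1 iotaD map_cat -IHk cats1 /stage /= last_rcons.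
Qed.

Lemma size_stages k : size (stages k) = k.+1.
Proof. by rewrite stagesE size_map size_iota. Qed.

Lemma nth_stages k j : j <= k -> nth (t0, n0) (stages k) j = stage j.
Proof. by move=> jk; rewrite stagesE (nth_map 0) ?size_iota // nth_iota. Qed.

Lemma stageS k : stage k.+1 = next k (stages k).
Proof. by rewrite /stage /= last_rcons. Qed.

Definition nested k := Aal al (stage k).1 /\ forall j, j <= k ->
  Ubas al (stage k).2 (stage k).1 `<=` Ubas al (stage j).2 (stage j).1 /\
  (stage j).2 + (k - j) <= (stage k).2.

Lemma task_can_be_done k (t : Tt) : nested k -> Ubas al (stage k).2 (stage k).1 t ->
  exists b, forall m, b <= m -> task_done k (stages k) (t, m).
Proof.
move=> [_ Hnest] Ut; rewrite /task_done.
case: (task k) => [[[s i] k0]|]; last by exists 0.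
set q := nth _ _ k0.
have [[k0k [Hs [qs qsi]]]|Hnot] :=
  pselect (k0 < size (stages k) /\ small q.2 s /\ q.1 s /\ q.1 (rcons s i)); last first.
  by exists 0 => m _ ? ? ? ?; case: Hnot.
rewrite size_stages ltnS in k0k.
have Eq : q = stage k0 by rewrite /q nth_stages.
have [At [_ Hrank]] := proj1 (Hnest k0 k0k) t Ut.
have hs : hsame q.1 t s by rewrite Eq in Hs qs *; apply: Hrank.
have [a [b [Ha [Hb _]]]] := hs.
have : olt (rank q.1 (rcons s i)) (rank t s).
  by apply: ole_trans (proj1 (hsame_rank hs)); apply: ole_rank_child; first exists a.
rewrite (rank_unfold (ex_intro _ b Hb)) => /oleS_sup [j].
case tsj: (t (rcons s j)); last by move/oleS0.
move/oleSS => Hj; exists (bound (rcons s j)) => m bm _ _ _ _.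
by exists j; split=> //; apply: small_le bm (small_bound _).
Qed.

Lemma next_exists k : nested k -> exists p, next_ok k (stages k) p.
Proof.
move=> Hk; rewrite /next_ok -/(stage k).
have [t [Ut Ft]] : exists t, Ubas al (stage k).2 (stage k).1 t /\ F k t.
  have [_ Fdense] := F_open_dense k; apply: Fdense; first exact: Ubas_open (proj1 Hk).
  by exists (stage k).1; apply: Ubas_center (proj1 Hk).
have [m0 Hm0] := tau_open_nbhs (proj1 (F_open_dense k)) Ft.
have [b Hb] := task_can_be_done Hk Ut.
exists (t, maxn (maxn m0 (stage k).2.+1) b); split=> //=; last exact/Hb/leq_maxr.
  by apply/Hm0; rewrite !leq_max leqnn.
by rewrite !leq_max ltnSn orbT.
Qed.

Lemma stage_nested k : nested k /\ next_ok k (stages k) (stage k.+1).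
Proof.
have next_okS j : nested j -> next_ok j (stages j) (stage j.+1).
  rewrite stageS /next => /next_exists Hj; case: pselect => [H|//].
  exact: (projT2 (cid H)).
elim: k => [|k [Hk Pk]].
  have H0 : nested 0.
    by split=> [|j]; [apply: At0|rewrite leqn0 => /eqP->; rewrite addn0; split].
  by split=> //; apply: next_okS.
suff Hk1 : nested k.+1 by split=> //; apply: next_okS.
case: Pk; rewrite -/(stage k) => Uk1 _ lt_k1 _.
split; first by case: Uk1.
move=> j; rewrite leq_eqVlt => /orP[/eqP->|]; first by rewrite subnn addn0; split.
rewrite ltnS => jk; have [sub_kj le_kj] := proj2 Hk j jk; split.
  exact: subset_trans (Ubas_shrink (ltnW lt_k1) Uk1) sub_kj.
by rewrite subSn //; lia.
Qed.

Lemma stage_Aal k : Aal al (stage k).1.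
Proof. exact: (proj1 (proj1 (stage_nested k))). Qed.

Lemma stage_sub j k : j <= k ->
  Ubas al (stage k).2 (stage k).1 `<=` Ubas al (stage j).2 (stage j).1.
Proof. by move=> jk; case: (proj2 (proj1 (stage_nested k)) j jk). Qed.

Lemma stage_radius_le j k : j <= k -> (stage j).2 + (k - j) <= (stage k).2.
Proof. by move=> jk; case: (proj2 (proj1 (stage_nested k)) j jk). Qed.

Lemma stage_F k : Ubas al (stage k.+1).2 (stage k.+1).1 `<=` F k.
Proof. by case: (proj2 (stage_nested k)). Qed.

Lemma stage_task k : task_done k (stages k) (stage k.+1).
Proof. by case: (proj2 (stage_nested k)). Qed.

Lemma stage_in j k : j <= k -> Ubas al (stage j).2 (stage j).1 (stage k).1.
Proof. by move=> jk; apply: (stage_sub jk); apply: Ubas_center (stage_Aal k). Qed.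

Lemma stage_small j k s : j <= k -> small (stage j).2 s -> small (stage k).2 s.
Proof. by move=> jk; apply: small_le; have := stage_radius_le jk; lia. Qed.

Lemma stage_agree j k s : j <= k -> small (stage j).2 s -> (stage k).1 s = (stage j).1 s.
Proof. by move=> jk Hs; case: (stage_in jk) => _ [E _]; apply: E. Qed.

Lemma stage_hsame j k s : j <= k -> small (stage j).2 s -> (stage j).1 s ->
  hsame (stage j).1 (stage k).1 s.
Proof. by move=> jk Hs Hj; case: (stage_in jk) => _ [_ E]; apply: E. Qed.

Lemma small_stage_bound s : small (stage (bound s)).2 s.
Proof.
apply: small_le (small_bound s).
by have := stage_radius_le (leq0n (bound s)); rewrite subn0; lia.
Qed.

(* The node s is frozen from stage [bound s] on. *)
Definition limit_tree : Tt := fun s => (stage (bound s)).1 s.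

Definition limit_rank s := rank (stage (bound s)).1 s.

Lemma limit_tree_agree k s : small (stage k).2 s -> limit_tree s = (stage k).1 s.
Proof.
move=> Hs; rewrite /limit_tree; case: (leqP k (bound s)) => kb.
  exact: stage_agree kb Hs.
by rewrite (stage_agree (ltnW kb) (small_stage_bound s)).
Qed.

Lemma limit_tree_Tr : Tr limit_tree.
Proof.
move=> s s' ss' Ts; set k := maxn (bound s) (bound s').
have Hs : small (stage k).2 s by apply: stage_small (small_stage_bound s); apply: leq_maxl.
have Hs' : small (stage k).2 s' by apply: stage_small (small_stage_bound s'); apply: leq_maxr.
rewrite (limit_tree_agree Hs'); rewrite (limit_tree_agree Hs) in Ts.
by case: (stage_Aal k) => [[Htr _] _]; apply: Htr ss' Ts.
Qed.

Lemma rank_stage_limit k s : small (stage k).2 s -> limit_tree s ->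
  oeq (rank (stage k).1 s) (limit_rank s).
Proof.
move=> Hs Ts; rewrite /limit_rank; case: (leqP k (bound s)) => kb.
  apply/hsame_rank/stage_hsame => //; by rewrite -(limit_tree_agree Hs).
by apply/oeq_sym/hsame_rank/stage_hsame => //; [apply: ltnW|apply: small_stage_bound].
Qed.

Lemma limit_rank_child s j : limit_tree (rcons s j) ->
  olt (limit_rank (rcons s j)) (limit_rank s).
Proof.
move=> Tsj; set k := bound (rcons s j).
have Hsj : small (stage k).2 (rcons s j) := small_stage_bound _.
have Hs : small (stage k).2 s := small_rcons Hsj.
have Ts : limit_tree s by apply: limit_tree_Tr Tsj; apply: prefix_rcons.
apply: ole_trans (ole_succ_mono (proj2 (rank_stage_limit Hsj Tsj))) _.
apply: ole_trans (proj1 (rank_stage_limit Hs Ts)).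
apply: ole_rank_child; last by rewrite -(limit_tree_agree Hsj).
by apply: Aal_hrank (stage_Aal k) _; rewrite -(limit_tree_agree Hs).
Qed.

Lemma limit_rank_ge s : limit_tree s ->
  (forall j, limit_tree (rcons s j) ->
     ole (limit_rank (rcons s j)) (rank limit_tree (rcons s j))) ->
  ole (limit_rank s) (OL (fun j => if limit_tree (rcons s j)
                                   then OS (rank limit_tree (rcons s j)) else OZ)).
Proof.
move=> Ts IHs; set k0 := bound s.
have [a Ha] := Aal_hrank (stage_Aal k0) Ts.
rewrite /limit_rank -/k0 (rank_unfold (ex_intro _ a Ha)).
apply: ole_limiting => i; case si: ((stage k0).1 (rcons s i)); last exact: ole_zero.
have [k k0k Ek] := task_often (s, i, k0) k0.
have := stage_task k; rewrite /task_done Ek size_stages nth_stages //.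
case/(_ k0k (small_stage_bound s) Ts si) => j [sj Hsj Hle].
have Tsj : limit_tree (rcons s j) by rewrite (limit_tree_agree Hsj).
apply: ole_trans (ole_succ_mono Hle) _; apply: (@ole_cocone _ _ j).
rewrite Tsj; apply: ole_succ_mono.
exact: ole_trans (proj1 (rank_stage_limit Hsj Tsj)) (IHs j Tsj).
Qed.

Lemma limit_hrank s : limit_tree s ->
  hrank limit_tree s (rank limit_tree s) /\ oeq (rank limit_tree s) (limit_rank s).
Proof.
move: {2}(limit_rank s) (erefl (limit_rank s)) => x.
elim/(well_founded_induction olt_wf): x s => x IHx s Hx Ts.
have IHs j : limit_tree (rcons s j) -> hrank limit_tree (rcons s j) (rank limit_tree (rcons s j))
    /\ oeq (rank limit_tree (rcons s j)) (limit_rank (rcons s j)).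
  by move=> Tsj; apply: (IHx (limit_rank (rcons s j))) => //; rewrite -Hx; apply: limit_rank_child.
have Hs := hrank_intro Ts (fun j Tsj => proj1 (IHs j Tsj)).
rewrite (rankE Hs); split=> //; split.
  apply: ole_limiting => j; case Tsj: (limit_tree (rcons s j)); last exact: ole_zero.
  exact: ole_trans (ole_succ_mono (proj1 (proj2 (IHs j Tsj)))) (limit_rank_child Tsj).
by apply: limit_rank_ge => // j Tsj; case: (proj2 (IHs j Tsj)).
Qed.

Lemma limit_tree_Ubas k : Ubas al (stage k).2 (stage k).1 limit_tree.
Proof.
have T0 : limit_tree [::].
  by have [_ [a [Ha _]]] := stage_Aal (bound [::]); apply: hrank_node Ha.
have [H0 H0_eq] := limit_hrank T0.
split; last split; first split; first split.
- exact: limit_tree_Tr.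
- by move=> [f Hf]; apply: (hrank_no_branch (f := f) H0).
- exists (rank limit_tree [::]); split=> //; apply: oeq_trans H0_eq _.
  have [_ [a [Ha Hal]]] := stage_Aal (bound [::]).
  by rewrite /limit_rank (rankE Ha).
- exact: limit_tree_agree.
move=> s Hs ks; have Ts : limit_tree s by rewrite (limit_tree_agree Hs).
have [Hts Hts_eq] := limit_hrank Ts.
have [a Ha] := Aal_hrank (stage_Aal k) ks.
exists (rank (stage k).1 s), (rank limit_tree s); split; first by apply: rankP; exists a.
by split=> //; apply: oeq_trans (rank_stage_limit Hs Ts) (oeq_sym Hts_eq).
Qed.

End BaireConstruction.

Lemma tau_Baire al : Baire_in (tau_open al).
Proof.
move=> F hF O HO [t0 Ot0].
have [n0 Hn0] := tau_open_nbhs HO Ot0.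
have At0 : Aal al t0 by case: HO => sub _; apply: sub.
exists (limit_tree al F t0 n0); split.
  by apply: (Hn0 n0 (leqnn _)); apply: (@limit_tree_Ubas al F t0 n0 hF At0 0).
by move=> k _; apply: (@stage_F al F t0 n0 hF At0 k); apply: limit_tree_Ubas.
Qed.

Lemma hrank_transfer (t t' : Tt) s s' a : hrank t s a ->
  (forall r, t' (s' ++ r) = t (s ++ r)) -> hrank t' s' a.
Proof.
move=> Ha; elim: Ha s' => {}s g ts _ IH s' E.
have E1 n : t' (rcons s' n) = t (rcons s n) by rewrite -!cats1 E.
have -> : (fun n => if t (rcons s n) then OS (g n) else OZ) =
          (fun n => if t' (rcons s' n) then OS (g n) else OZ).
  by apply: funext => n; rewrite E1.
apply: hrank_intro => [|n Hn]; first by have := E [::]; rewrite !cats0 => ->.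
by apply: IH => [|r]; [rewrite -E1|rewrite -!cats1 -!catA E].
Qed.

Definition relabel_top (P : pred nat) (sg : nat -> nat) (t : Tt) : Tt :=
  fun s => if s is j :: r then P j && t (sg j :: r) else t [::].

Lemma relabel_top_Ubas al n (t : Tt) (P : pred nat) (sg : nat -> nat) : Aal al t ->
  (forall j, j < n -> P j /\ sg j = j) ->
  (forall j, t [:: j] ->
     exists j', [/\ P j', t [:: sg j'] & ole (rank t [:: j]) (rank t [:: sg j'])]) ->
  Ubas al n t (relabel_top P sg t).
Proof.
move=> At fix_small dominated; set t' := relabel_top P sg t.
have [[Htr _] [a0 [Ha0 Ha0al]]] := At.
have t'E j r : P j -> t' (j :: r) = t (sg j :: r) by rewrite /t' /= => ->.
have t_root : t [::] := hrank_node Ha0.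
have Htr' : Tr t'.
  move=> [|j r] [|j' r'] //= /andP[/eqP <- Hp] /andP[Pj Ht]; rewrite Pj.
  by apply: Htr Ht; rewrite /= eqxx.
have child j : t' [:: j] -> hrank t' [:: j] (rank t [:: sg j]).
  move=> /andP[Pj Hj]; have [b Hb] := Aal_hrank At Hj.
  by apply: (hrank_transfer (rankP (ex_intro _ b Hb))) => r; rewrite t'E.
have Hr := @hrank_intro t' [::] (fun j => rank t [:: sg j]) t_root child.
set a' := OL _ in Hr.
have a'_eq : oeq a' (rank t [::]).
  rewrite (rank_unfold (ex_intro _ a0 Ha0)); split.
    apply: ole_limiting => j; case Tj: (t' [:: j]); last exact: ole_zero.
    apply: (@ole_cocone _ _ (sg j)); case/andP: Tj => _ ->; exact: ole_refl.
  apply: ole_limiting => j; case Tj: (t [:: j]); last exact: ole_zero.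
  have [j' [Pj' Tj' Hle]] := dominated j Tj.
  by apply: (@ole_cocone _ _ j'); rewrite /= Pj' Tj'; apply: ole_succ_mono.
split; [split; [split=> // -[f Hf]|]|split].
- by apply: (hrank_no_branch (f := f) Hr) => m; apply: Hf.
- by exists a'; split=> //; apply: oeq_trans a'_eq _; rewrite (rankE Ha0).
- by move=> [|j r] // /andP[_ /andP[jn _]]; have [Pj sgj] := fix_small j jn; rewrite t'E // sgj.
move=> [|j r] Hs Ht.
  exists (rank t [::]), a'; split; first exact: rankP (ex_intro _ a0 Ha0).
  by split=> //; apply: oeq_sym.
have [b Hb] := Aal_hrank At Ht.
exists b, b; split=> //; split; last exact: oeq_refl.
case/andP: Hs => _ /andP[jn _]; have [Pj sgj] := fix_small j jn.
by apply: (hrank_transfer Hb) => r'; rewrite t'E // sgj.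
Qed.

Lemma Aal_root_child al (t : Tt) : olt OZ al -> Aal al t -> exists j, t [:: j].
Proof.
move=> al_pos [_ [a [Ha [_ a_al]]]].
have : olt OZ (rank t [::]) by rewrite (rankE Ha); apply: ole_trans al_pos a_al.
rewrite (rank_unfold (ex_intro _ a Ha)) => /oleS_sup [j].
by case Tj: (t (rcons [::] j)); [exists j|move/oleS0].
Qed.

Section Perturbation.
Variables (al : Ord) (n : nat) (t : Tt).
Hypotheses (al_pos : olt OZ al) (At : Aal al t).

Lemma Ubas_copy_to_gap m : n <= m -> ~ t [:: m] -> exists2 t', Ubas al n t t' & t' <> t.
Proof.
move=> nm tm; have [j0 tj0] := Aal_root_child al_pos At.
pose sg j := if j == m then j0 else j.
exists (relabel_top predT sg t).
  apply: relabel_top_Ubas => // j.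
    by move=> jn; rewrite /sg ifN // neq_ltn (leq_trans jn nm).
  move=> tj; exists j; rewrite /sg ifN; last by apply: contraPneq tm => <-.
  by split=> //; apply: ole_refl.
by move/(congr1 (fun u : Tt => u [:: m])); rewrite /= /sg eqxx tj0 => /esym.
Qed.

Lemma Ubas_swap m r : n <= m -> t (m :: r) <> t (m.+1 :: r) ->
  exists2 t', Ubas al n t t' & t' <> t.
Proof.
move=> nm tmr; pose sg j := if j == m then m.+1 else if j == m.+1 then m else j.
have sgK : involutive sg.
  move=> j; rewrite /sg; have [->|jm] := eqVneq j m; first by rewrite eqxx ifN ?eqxx // gtn_eqF.
  by have [->|jm1] := eqVneq j m.+1; rewrite ?eqxx ?(negbTE jm) ?(negbTE jm1).
exists (relabel_top predT sg t).
  apply: relabel_top_Ubas => // j.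
    move=> jn; have jm : j < m := leq_trans jn nm.
    by rewrite /sg (ltn_eqF jm) (ltn_eqF (ltn_trans jm (ltnSn m))).
  by move=> tj; exists (sg j); rewrite sgK; split=> //; apply: ole_refl.
by move/(congr1 (fun u : Tt => u (m :: r))); rewrite /= /sg eqxx => /esym.
Qed.

Lemma Ubas_delete m : n <= m -> t [:: m] -> (forall r, t (m.+1 :: r) = t (m :: r)) ->
  exists2 t', Ubas al n t t' & t' <> t.
Proof.
move=> nm tm tE; exists (relabel_top (fun j => j != m) id t).
  apply: relabel_top_Ubas => // j.
    by move=> jn; rewrite neq_ltn (leq_trans jn nm).
  move=> tj; have [Ejm|jm] := eqVneq j m; last by exists j; split=> //; apply: ole_refl.
  rewrite {}Ejm in tj *; exists m.+1; split; first by rewrite gtn_eqF.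
    by rewrite tE.
  have [b Hb] := Aal_hrank At tj.
  have Hm1 := @hrank_transfer t t [:: m] [:: m.+1] _ (rankP (ex_intro _ b Hb)) tE.
  by rewrite /= (rankE Hm1); apply: ole_refl.
by move/(congr1 (fun u : Tt => u [:: m])); rewrite /= eqxx tm.
Qed.

Lemma Ubas_nontrivial : exists2 t', Ubas al n t t' & t' <> t.
Proof.
have [[m [nm tm]]|full] := pselect (exists m, n <= m /\ ~ t [:: m]).
  exact: Ubas_copy_to_gap nm tm.
have tn : t [:: n] by apply: contrapT => tn; apply: full; exists n.
have [[r tr]|same] := pselect (exists r, t (n :: r) <> t (n.+1 :: r)).
  exact: Ubas_swap (leqnn n) tr.
apply: Ubas_delete (leqnn n) tn _ => r.
by apply: contrapT => tr; apply: same; exists r => /esym.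
Qed.

End Perturbation.

Lemma tau_no_isolated al : olt OZ al -> forall t, ~ isolated_in (Aal al) (tau_open al) t.
Proof.
move=> al_pos t [At Ot].
have [n Hn] := tau_open_nbhs Ot (erefl t).
have [t' Ut' t't] := Ubas_nontrivial n al_pos At.
exact/t't/(Hn n (leqnn n)).
Qed.

Lemma open_small_nbhs (O : set Tt) (x : Tt) : open O -> O x ->
  exists n, forall y : Tt, (forall s, small n s -> y s = x s) -> O y.
Proof.
move=> oO Ox; apply: contrapT => /forallNP far.
have near_far n : exists y : Tt, (forall s, small n s -> y s = x s) /\ ~ O y.
  by have /existsNP [y /not_implyP Hy] := far n; exists y.
have [y Hy] := choice near_far.
have y_cvg : y @ \oo --> x.
  apply/cvg_sup => i A /= [_ [[B Bop <-] Bfs sBfA]]; apply: filterS sBfA _.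
  by exists (bound i) => // n /= Hn; rewrite (proj1 (Hy n) i (small_le Hn (small_bound i))).
have [N _ HN] : (y @ \oo) O by apply: y_cvg; apply: open_nbhs_nbhs.
exact: (proj2 (Hy N)) (HN N (leqnn N)).
Qed.

Lemma tau_open_trace al (O : set Tt) : open O -> tau_open al (O `&` Aal al).
Proof.
move=> oO; split=> [t [] //|t [Ot At]]; have [n Hn] := open_small_nbhs oO Ot.
exists n, t; split=> //; split; first exact: Ubas_center.
by move=> t' [At' [E _]]; split=> //; apply: Hn => s /E.
Qed.

Lemma Borel_Tr_tau al (B : set Tt) : B `<=` Aal al -> Borel_Tr B -> Borel_tau al B.
Proof.
move=> BA HB; have AalTr : Aal al `<=` Tr by move=> t [[]].
pose C := [set B : set Tt | Borel_tau al (B `&` Aal al)].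
have sC : sigma_algebra Tr C.
  split; first by rewrite /C /= set0I; apply: sigma_algebra0.
    move=> A CA; rewrite /C /=.
    have -> : (Tr `\` A) `&` Aal al = Aal al `\` (A `&` Aal al).
      apply/seteqP; split=> x /=; first by move=> [[_ nA] Ax]; split=> // -[].
      by move=> [Ax nA]; split=> //; split=> [|Ax']; [apply: AalTr|apply: nA].
    exact: sigma_algebraCD.
  by move=> A CA; rewrite /C /= setI_bigcupl; apply: sigma_algebra_bigcup.
have openC : Tr_open `<=` C.
  move=> _ [U [oU ->]]; rewrite /C /= setIAC (setIidr AalTr) setIC.
  by apply: sub_sigma_algebra; apply: tau_open_trace.
have := smallest_sub sC openC HB; rewrite /C /=.
by rewrite (setIidl BA).
Qed.

Theorem lemma5p2 (al : Ord) :
  Baire_in (tau_open al) /\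
  (olt OZ al -> forall t, ~ isolated_in (Aal al) (tau_open al) t) /\
  (forall B : set Tt, B `<=` Aal al -> Borel_Tr B -> Borel_tau al B).
Proof.
split; first exact: tau_Baire.
split; first exact: tau_no_isolated.
exact: Borel_Tr_tau.
Qed.
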